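(* Let $\Gamma((r^S)_{S\subseteq I})$ be a quitting game satisfying $r^i_i=0$ for all $i\in I$, with $I_*=[n]\neq\emptyset$. If the problem $\mathrm{LCP}((\hat r^i)_{i=1}^n,\vec 0)$ has a solution $(w,z)$ with $z_0<1$, then for every $\varepsilon>0$ the game has a stationary $\varepsilon$-equilibrium.
   Context: A quitting game $\Gamma((r^S)_{S\subseteq I})$: finite player set $I=[N]$, vectors $r^S\in[-1,1]^N$ for all $S\subseteq I$; at each stage $t\in\mathbb N$ each player chooses to continue or quit; with $t^*$ the first stage at which some player quits and $S^*$ the set of players quitting then ($S^*=\emptyset$ if nobody ever quits), the payoff is $r^{S^*}$. Write $r^i:=r^{\{i\}}$. Strategies are sequences $x_i=(x_i^t)_t\subset[0,1]$ of conditional quitting probabilities; stationary if constant in $t$. $\gamma(x):=\mathbb E_x[r^{S^*}]$; $x$ is an $\varepsilon$-equilibrium if $\gamma_i(x)\ge\gamma_i(x_i',x_{-i})-\varepsilon$ for all $i,x_i'$. Normal players: $I_0:=I$, $I_{l+1}:=\{i\in I_l:\ \exists j\in I_l,\ j\neq i,\ r^j_i\le0\}$, $I_*:=\bigcap_l I_l$; $n:=|I_*|$, and players are renamed so that $I_*=[n]$. For $i\in[n]$, $\hat r^i\in\mathbb R^n$ is the restriction of $r^i$ to the coordinates in $I_*$. For vectors $\hat r^1,\dots,\hat r^n,q\in\mathbb R^n$, the problem $\mathrm{LCP}((\hat r^i)_{i=1}^n,q)$ asks for $w\in\mathbb R^n_{\ge0}$ and a probability vector $z=(z_0,z_1,\dots,z_n)\in\Delta(\{0,1,\dots,n\})$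 such that $w=z_0q+\sum_{i=1}^n z_i\hat r^i$ and, for every $i\in[n]$, $z_i=0$ or $w_i=0$. *)

From mathcomp Require Import all_boot.
From Stdlib Require Import Reals ClassicalEpsilon.
Set Implicit Arguments. Unset Strict Implicit. Unset Printing Implicit Defensive.

Local Open Scope R_scope.

(* Players are 'I_N; a quitting game is given by payoffs r S i = r^S_i. *)
Definition payoffs (N : nat) := {set 'I_N} -> 'I_N -> R.

Definition valid_game (N : nat) (r : payoffs N) : Prop :=
  forall S i, -1 <= r S i <= 1.

(* A strategy profile: x i t = conditional quitting probability of player i
   at stage t (stages indexed from 0). *)
Definition profile (N : nat) := 'I_N -> nat -> R.

Definition is_strategy (y : nat -> R) : Prop := forall t, 0 <= y t <= 1.
Definition is_profile (N : nat) (x : profile N) : Prop :=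
  forall i, is_strategy (x i).
Definition stationary (N : nat) (x : profile N) : Prop :=
  forall i t, x i t = x i 0%nat.

Definition deviate (N : nat) (x : profile N) (i : 'I_N) (y : nat -> R)
  : profile N := fun j => if j == i then y else x j.

(* probability that exactly the set S quits at stage t (given play reached t) *)
Definition quit_prob (N : nat) (x : profile N) (t : nat) (S : {set 'I_N}) : R :=
  \big[Rmult/1]_(i in S) x i t * \big[Rmult/1]_(i in ~: S) (1 - x i t).

Definition reach (N : nat) (x : profile N) (t : nat) : R :=
  \big[Rmult/1]_(s < t) \big[Rmult/1]_(i < N) (1 - x i s).

(* expected payoff of player i truncated at stage T:
   outcomes decided before T, plus r^emptyset times Prob(no quit before T) *)
Definition partial_payoff (N : nat) (r : payoffs N) (x : profile N)
  (i : 'I_N) (T : nat) : R :=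
  \big[Rplus/0]_(t < T)
     (reach x t * \big[Rplus/0]_(S : {set 'I_N} | S != set0)
                    (quit_prob x t S * r S i))
  + reach x T * r set0 i.

(* gamma_i(x) = v : the expected payoff E_x[r^{S*}_i]; the truncated
   expectations always converge to it. *)
Definition payoff_is (N : nat) (r : payoffs N) (x : profile N) (i : 'I_N) (v : R)
  : Prop := Un_cv (partial_payoff r x i) v.

Definition eps_equilibrium (N : nat) (r : payoffs N) (x : profile N) (eps : R)
  : Prop :=
  is_profile x /\
  forall (i : 'I_N) (y : nat -> R), is_strategy y ->
  forall v w, payoff_is r x i v -> payoff_is r (deviate x i y) i w ->
  v >= w - eps.

Definition Rleb (a b : R) : bool := if Rle_dec a b then true else false.

Definition normal_step (N : nat) (r : payoffs N) (A : {set 'I_N}) : {set 'I_N} :=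
  [set i in A | [exists j in A, (j != i) && Rleb (r [set j] i) 0]].

Definition I_level (N : nat) (r : payoffs N) (l : nat) : {set 'I_N} :=
  iter l (normal_step r) [set: 'I_N].

Definition Istar (N : nat) (r : payoffs N) : {set 'I_N} :=
  [set i | if excluded_middle_informative (forall l, i \in I_level r l)
           then true else false].

(* LCP((hat r^i)_{i in I_*}, q) with players of I_* kept under their original
   names: w, z indexed by I_*, z0 the weight of q. *)
Definition LCP_sol (N : nat) (r : payoffs N) (q : 'I_N -> R)
  (w : 'I_N -> R) (z0 : R) (z : 'I_N -> R) : Prop :=
  0 <= z0 /\
  (forall i, i \in Istar r -> 0 <= z i) /\
  z0 + \big[Rplus/0]_(i in Istar r) z i = 1 /\
  (forall k, k \in Istar r ->
     0 <= w k /\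
     w k = z0 * q k + \big[Rplus/0]_(i in Istar r) (z i * r [set i] k) /\
     (z k = 0 \/ w k = 0)).

(* Normalising the LCP solution gives a distribution rho supported on I_* such that
   c_k := sum_j rho_j r^j_k is nonnegative for every player k (for k in I_* it is a
   multiple of w_k, and outside I_* every r^j_k with j in I_* is positive) and
   rho_k c_k = 0.  Let each player i quit with the small stationary probability
   dl * rho_i.  A stage in which player k continues gives him the expected payoff
   dl * c_k + O(dl^2), while a stage in which he quits gives at most the probability
   that somebody else quits too, which is O(dl), since r^k_k = 0; his stationary payoff
   V is the expected stage payoff divided by the stopping probability.  The two
   conditions on c then show that neither quitting now nor continuing for one stage
   gains more than eps over V, and discounting over the stages extends this to every
   deviation.  When rho is a point mass at k0 the opponents of k0 would never quit, so
   rho is replaced by a mixture of k0 and an opponent j0 with r^j0_k0 <= 0, which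
   exists because k0 is in I_*. *)

From Stdlib Require Import Reals Lra Psatz Classical ClassicalEpsilon.
From HB Require Import structures.
From mathcomp Require Import all_boot.
Set Implicit Arguments. Unset Strict Implicit. Unset Printing Implicit Defensive.

Local Open Scope R_scope.
HB.instance Definition _ := Monoid.isComLaw.Build R 0 Rplus
  (fun x y z => esym (Rplus_assoc x y z)) Rplus_comm Rplus_0_l.
HB.instance Definition _ := Monoid.isComLaw.Build R 1 Rmult
  (fun x y z => esym (Rmult_assoc x y z)) Rmult_comm Rmult_1_l.
HB.instance Definition _ := Monoid.isMulLaw.Build R 0 Rmult Rmult_0_l Rmult_0_r.
HB.instance Definition _ :=
  Monoid.isAddLaw.Build R Rmult Rplus Rmult_plus_distr_r Rmult_plus_distr_l.

Section RealBigops.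
Variable I : finType.
Implicit Types (P : pred I) (F G : I -> R).

Lemma sumR_le P F G : (forall i, P i -> F i <= G i) ->
  \big[Rplus/0]_(i | P i) F i <= \big[Rplus/0]_(i | P i) G i.
Proof. by move=> FG; elim/big_rec2: _ => [|i a b Pi]; [lra | have := FG i Pi; lra]. Qed.

Lemma sumR_ge0 P F : (forall i, P i -> 0 <= F i) -> 0 <= \big[Rplus/0]_(i | P i) F i.
Proof. by move=> F0; elim/big_rec: _ => [|i a Pi]; [lra | have := F0 i Pi; lra]. Qed.

Lemma sumR_abs_le P F G : (forall i, P i -> - G i <= F i <= G i) ->
  - (\big[Rplus/0]_(i | P i) G i) <= \big[Rplus/0]_(i | P i) F i
  <= \big[Rplus/0]_(i | P i) G i.
Proof. by move=> FG; elim/big_rec2: _ => [|i a b Pi]; [lra | have := FG i Pi; lra]. Qed.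

Lemma sumR_ge_term P F i : P i -> (forall j, P j -> 0 <= F j) ->
  F i <= \big[Rplus/0]_(j | P j) F j.
Proof.
move=> Pi F0; rewrite (bigD1 i) //=.
suff: 0 <= \big[Rplus/0]_(j | P j && (j != i)) F j by lra.
by apply: sumR_ge0 => j /andP[Pj _]; apply: F0.
Qed.

Lemma sumRB P F G : \big[Rplus/0]_(i | P i) (F i - G i) =
  \big[Rplus/0]_(i | P i) F i - \big[Rplus/0]_(i | P i) G i.
Proof. by elim/big_rec3: _ => [|i a b c Pi ->]; lra. Qed.

Lemma prodR_ge0 P F : (forall i, P i -> 0 <= F i) -> 0 <= \big[Rmult/1]_(i | P i) F i.
Proof. by move=> F0; elim/big_rec: _ => [|i a Pi]; [lra | have := F0 i Pi; nra]. Qed.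

Lemma prodR_le1 P F : (forall i, P i -> 0 <= F i <= 1) -> \big[Rmult/1]_(i | P i) F i <= 1.
Proof.
move=> F01; suff: 0 <= \big[Rmult/1]_(i | P i) F i <= 1 by case.
by elim/big_rec: _ => [|i a Pi]; [lra | have := F01 i Pi; nra].
Qed.

Lemma Weierstrass_prod_ge P F : (forall i, P i -> 0 <= F i <= 1) ->
  1 - \big[Rplus/0]_(i | P i) F i <= \big[Rmult/1]_(i | P i) (1 - F i).
Proof.
move=> F01; suff: 1 - \big[Rplus/0]_(i | P i) F i <= \big[Rmult/1]_(i | P i) (1 - F i)
   /\ 0 <= \big[Rplus/0]_(i | P i) F i by case.
by elim/big_rec2: _ => [|i a b Pi []]; [lra | have := F01 i Pi; split; nra].
Qed.

End RealBigops.

Section QuitDistribution.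
Variable I : finType.
Implicit Types (f : I -> R) (S : {set I}).

Definition quit_dist f S : R :=
  \big[Rmult/1]_(i in S) f i * \big[Rmult/1]_(i in ~: S) (1 - f i).

Definition in01 f := forall i, 0 <= f i <= 1.

Lemma quit_distE f S :
  quit_dist f S = \big[Rmult/1]_i (if i \in S then f i else 1 - f i).
Proof.
rewrite /quit_dist [RHS](bigID (mem S)) /=; congr (_ * _).
  by apply: eq_bigr => i ->.
rewrite [RHS](eq_bigr (fun i => 1 - f i)) => [|i /negbTE -> //].
by apply: eq_bigl => i; rewrite in_setC.
Qed.

Lemma quit_dist_ge0 f S : in01 f -> 0 <= quit_dist f S.
Proof.
by move=> f01; rewrite quit_distE; apply: prodR_ge0 => i _; case: (i \in S); have := f01 i; lra.
Qed.

Lemma sum_quit_dist f : \big[Rplus/0]_S quit_dist f S = 1.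
Proof.
have -> : \big[Rplus/0]_S quit_dist f S = \big[Rmult/1]_i (f i + (1 - f i)).
  by rewrite bigA_distr; apply: eq_bigr => S _; rewrite quit_distE.
by rewrite big1 // => i _; lra.
Qed.

Lemma quit_dist_set0 f : quit_dist f set0 = \big[Rmult/1]_i (1 - f i).
Proof. by rewrite quit_distE; apply: eq_bigr => i _; rewrite in_set0. Qed.

Lemma quit_dist_set1 f j :
  quit_dist f [set j] = f j * \big[Rmult/1]_(i | i != j) (1 - f i).
Proof.
by rewrite /quit_dist big_set1; congr (_ * _); apply: eq_bigl => i; rewrite in_setC in_set1.
Qed.

Lemma sum_quit_dist_setN0 f :
  \big[Rplus/0]_(S | S != set0) quit_dist f S = 1 - quit_dist f set0.
Proof. by have := sum_quit_dist f; rewrite (bigD1 set0) //=; lra. Qed.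

Lemma big_setN0_split (g : {set I} -> R) :
  \big[Rplus/0]_(S | S != set0) g S =
  \big[Rplus/0]_j g [set j] + \big[Rplus/0]_(S : {set I} | (1 < #|S|)%N) g S.
Proof.
rewrite (bigID (fun S : {set I} => #|S| == 1%N)) /= -big_cards1.
congr (_ + _); apply: eq_bigl => S.
all: by rewrite -cards_eq0; case: #|S| => [|[|]].
Qed.

Section Estimates.
Variable f : I -> R.
Hypothesis f01 : in01 f.
Local Notation mass := (\big[Rplus/0]_i f i).
Local Notation single_mass := (\big[Rplus/0]_j quit_dist f [set j]).

Lemma quit_dist_set0_ge : 1 - mass <= quit_dist f set0.
Proof. by rewrite quit_dist_set0; apply: Weierstrass_prod_ge => i _; apply: f01. Qed.

Lemma quit_dist_set1_bounds j : f j * (1 - mass) <= quit_dist f [set j] <= f j.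
Proof.
rewrite quit_dist_set1.
have fj := f01 j.
have le1 : \big[Rmult/1]_(i | i != j) (1 - f i) <= 1.
  by apply: prodR_le1 => i _; have := f01 i; lra.
have ge : 1 - \big[Rplus/0]_(i | i != j) f i <= \big[Rmult/1]_(i | i != j) (1 - f i).
  by apply: Weierstrass_prod_ge => i _; apply: f01.
rewrite [\big[Rplus/0]_i _](bigD1 j) //=; split; nra.
Qed.

Lemma single_mass_bounds : mass * (1 - mass) <= single_mass <= mass.
Proof.
split; last by apply: sumR_le => j _; case: (quit_dist_set1_bounds j).
rewrite Rmult_comm big_distrr /=.
by apply: sumR_le => j _; rewrite Rmult_comm; case: (quit_dist_set1_bounds j).
Qed.

Lemma multiple_mass_le :
  \big[Rplus/0]_(S : {set I} | (1 < #|S|)%N) quit_dist f S <= mass - single_mass.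
Proof.
by have := sum_quit_dist_setN0 f; rewrite big_setN0_split; have := quit_dist_set0_ge; lra.
Qed.

Lemma quit_payoff_approx (g : {set I} -> R) : (forall S, -1 <= g S <= 1) ->
  - (2 * (mass - single_mass)) <=
  \big[Rplus/0]_(S | S != set0) (quit_dist f S * g S) - \big[Rplus/0]_j (f j * g [set j])
  <= 2 * (mass - single_mass).
Proof.
move=> g11; rewrite big_setN0_split.
set single := \big[Rplus/0]_j (quit_dist f [set j] * g [set j]).
set multiple := \big[Rplus/0]_(S : {set I} | (1 < #|S|)%N) (quit_dist f S * g S).
have multiple_le := multiple_mass_le.
have [multiple_lo multiple_hi] :
    - (\big[Rplus/0]_(S : {set I} | (1 < #|S|)%N) quit_dist f S) <= multiple
    <= \big[Rplus/0]_(S : {set I} | (1 < #|S|)%N) quit_dist f S.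
  by apply: sumR_abs_le => S _; have := g11 S; have := quit_dist_ge0 S f01; split; nra.
have [single_lo single_hi] :
    - (\big[Rplus/0]_j (f j - quit_dist f [set j])) <=
    single - \big[Rplus/0]_j (f j * g [set j]) <=
    \big[Rplus/0]_j (f j - quit_dist f [set j]).
  rewrite /single -sumRB; apply: sumR_abs_le => j _.
  by have := g11 [set j]; have := quit_dist_set1_bounds j; split; nra.
rewrite sumRB in single_lo single_hi.
lra.
Qed.

End Estimates.
End QuitDistribution.

Definition set_coord (I : eqType) (p : I -> R) (k : I) (a : R) : I -> R :=
  fun i => if i == k then a else p i.

Section OnePlayer.
Variable I : finType.
Variables (p : I -> R) (k : I).
Hypothesis p01 : in01 p.

Definition others_continue := \big[Rmult/1]_i (1 - set_coord p k 0 i).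

Lemma set_coord_in01 a : 0 <= a <= 1 -> in01 (set_coord p k a).
Proof. by move=> a01 i; rewrite /set_coord; case: (i == k). Qed.

Lemma others_continue_ge0 : 0 <= others_continue.
Proof. by apply: prodR_ge0 => i _; have := set_coord_in01 (a := 0) ltac:(lra) i; lra. Qed.

Lemma quit_dist_split f S : (forall i, i != k -> f i = p i) ->
  quit_dist f S =
  f k * quit_dist (set_coord p k 1) S + (1 - f k) * quit_dist (set_coord p k 0) S.
Proof.
have split_k (F : I -> R) :
    \big[Rmult/1]_i F i = F k * \big[Rmult/1]_(i | i != k) F i by rewrite (bigD1 k).
move=> fp; rewrite !quit_distE !split_k /set_coord eqxx.
have others a : \big[Rmult/1]_(i | i != k)
    (if i \in S then set_coord p k a i else 1 - set_coord p k a i) =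
    \big[Rmult/1]_(i | i != k) (if i \in S then f i else 1 - f i).
  by apply: eq_bigr => i ik; rewrite /set_coord (negbTE ik) fp.
rewrite /set_coord in others; rewrite !others; case: (k \in S); ring.
Qed.

Lemma prod_continue_split f : (forall i, i != k -> f i = p i) ->
  \big[Rmult/1]_i (1 - f i) = (1 - f k) * others_continue.
Proof.
move=> fp; rewrite /others_continue (bigD1 k) //= [in RHS](bigD1 k) //=.
rewrite /set_coord eqxx Rminus_0_r Rmult_1_l.
by congr (_ * _); apply: eq_bigr => i ik; rewrite (negbTE ik) fp.
Qed.

Lemma sum_others : \big[Rplus/0]_i set_coord p k 0 i = \big[Rplus/0]_i p i - p k.
Proof.
rewrite [in RHS](bigD1 k) //= (bigD1 k) //= /set_coord eqxx Rplus_0_l.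
by rewrite (eq_bigr p) => [|i /negbTE ->]; first ring.
Qed.

Lemma quitting_payoff_bound (g : {set I} -> R) :
  (forall S, -1 <= g S <= 1) -> g [set k] = 0 ->
  - (1 - others_continue) <=
  \big[Rplus/0]_(S | S != set0) (quit_dist (set_coord p k 1) S * g S)
  <= 1 - others_continue.
Proof.
move=> g11 gk.
have k_quits := set_coord_in01 (a := 1) ltac:(lra).
have set1N0 : [set k] != set0 :> {set I}.
  by apply/eqP => /setP /(_ k); rewrite in_set1 in_set0 eqxx.
have mass := sum_quit_dist (set_coord p k 1).
have dist_set0 : quit_dist (set_coord p k 1) set0 = 0.
  by rewrite quit_dist_set0 (bigD1 k) //= /set_coord eqxx; ring.
have dist_setk : quit_dist (set_coord p k 1) [set k] = others_continue.
  rewrite quit_dist_set1 /others_continue [in RHS](bigD1 k) //= /set_coord eqxx.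
  by rewrite Rminus_0_r !Rmult_1_l; apply: eq_bigr => i /negbTE ->.
rewrite (bigD1 set0) //= dist_set0 (bigD1 [set k]) //= dist_setk in mass.
rewrite (bigD1 [set k]) //= gk Rmult_0_r Rplus_0_l.
set rest := \big[Rplus/0]_(S | (S != set0) && (S != [set k])) quit_dist _ S in mass.
set payoff := \big[Rplus/0]_(S | _) (quit_dist _ S * g S).
suff: - rest <= payoff <= rest by lra.
apply: sumR_abs_le => S _.
by have := g11 S; have := quit_dist_ge0 S k_quits; split; nra.
Qed.

End OnePlayer.

Lemma Un_cv_const (c : R) : Un_cv (fun=> c) c.
Proof. by move=> e e0; exists 0%nat => n _; rewrite /R_dist Rminus_diag Rabs_R0. Qed.

Lemma Un_cv_pow (th : R) : 0 <= th < 1 -> Un_cv (pow th) 0.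
Proof.
move=> th01 e e0; have [|M HM] := pow_lt_1_zero th _ e e0.
  by rewrite Rabs_pos_eq; lra.
by exists M => n nM; rewrite /R_dist Rminus_0_r; apply: HM.
Qed.

Lemma Un_cv_le_geometric (u : nat -> R) l M c th : Un_cv u l -> 0 <= th < 1 ->
  (forall n, u n <= M + c * th ^ n) -> l <= M.
Proof.
move=> ul th01 ub.
have := CV_plus _ _ _ _ (Un_cv_const M) (CV_mult _ _ _ _ (Un_cv_const c) (Un_cv_pow th01)).
rewrite Rmult_0_r Rplus_0_r; exact: Rle_cv_lim ub ul.
Qed.

Lemma Un_cv_ge_geometric (u : nat -> R) l M c th : Un_cv u l -> 0 <= th < 1 ->
  (forall n, M - c * th ^ n <= u n) -> M <= l.
Proof.
move=> ul th01 lb.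
suff: - l <= - M by lra.
apply: (Un_cv_le_geometric (c := c) (CV_opp _ _ ul) th01) => n.
by rewrite /opp_seq; have := lb n; lra.
Qed.

Section Discounting.
Variables (a c : nat -> R).
Hypotheses (a0 : a 0%nat = 1) (aS : forall t, a t.+1 = a t * c t).
Hypothesis a_ge0 : forall t, 0 <= a t.

Lemma discounted_sum_le (e : nat -> R) M : (forall t, e t <= M * (1 - c t)) ->
  forall T, \big[Rplus/0]_(t < T) (a t * e t) <= M * (1 - a T).
Proof.
move=> eM; elim=> [|T IH]; first by rewrite big_ord0 a0; lra.
rewrite big_ord_recr /= aS; set s := \big[Rplus/0]_(t < T) _ in IH *.
by have := eM T; have := a_ge0 T; nra.
Qed.

Lemma discounted_sum_ge (e : nat -> R) M : (forall t, M * (1 - c t) <= e t) ->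
  forall T, M * (1 - a T) <= \big[Rplus/0]_(t < T) (a t * e t).
Proof.
move=> eM; elim=> [|T IH]; first by rewrite big_ord0 a0; lra.
rewrite big_ord_recr /= aS; set s := \big[Rplus/0]_(t < T) _ in IH *.
by have := eM T; have := a_ge0 T; nra.
Qed.

End Discounting.

Section AgainstStationary.
Variables (N : nat) (r : payoffs N) (p : 'I_N -> R) (k : 'I_N).
Hypothesis p01 : in01 p.

Definition continue_payoff :=
  \big[Rplus/0]_(S | S != set0) (quit_dist (set_coord p k 0) S * r S k).
Definition quit_payoff :=
  \big[Rplus/0]_(S | S != set0) (quit_dist (set_coord p k 1) S * r S k).

Local Notation P := (others_continue p k).

Variable x : profile N.
Hypothesis x_others : forall i t, i != k -> x i t = p i.
Hypothesis x_profile : is_profile x.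

Local Notation stage_payoff t := (x k t * quit_payoff + (1 - x k t) * continue_payoff).

Lemma stage_payoffE t :
  \big[Rplus/0]_(S | S != set0) (quit_prob x t S * r S k) = stage_payoff t.
Proof.
rewrite /continue_payoff /quit_payoff !big_distrr -big_split /=.
apply: eq_bigr => S _; rewrite /quit_prob -/(quit_dist (fun i => x i t) S).
rewrite (quit_dist_split (p := p) (k := k)) => [|i /x_others -> //].
by rewrite Rmult_plus_distr_r !Rmult_assoc.
Qed.

Lemma reachS t : reach x t.+1 = reach x t * ((1 - x k t) * P).
Proof.
rewrite /reach big_ord_recr /=; congr (_ * _).
by rewrite (prod_continue_split (p := p) (k := k) (f := fun i => x i t)) => // i /x_others ->.
Qed.

Lemma reach0 : reach x 0 = 1.
Proof. by rewrite /reach big_ord0. Qed.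

Lemma reach_bounds t : 0 <= reach x t <= P ^ t.
Proof.
elim: t => [|t IH]; first by rewrite reach0 /=; lra.
have := x_profile k t; have := others_continue_ge0 k p01 => P0 xkt.
have step : 0 <= (1 - x k t) * P <= P by nra.
rewrite reachS /= Rmult_comm; split; first nra.
by apply: Rmult_le_compat; lra.
Qed.

Lemma partial_payoffE T : partial_payoff r x k T =
  \big[Rplus/0]_(t < T) (reach x t * stage_payoff t) + reach x T * r set0 k.
Proof.
by rewrite /partial_payoff; congr (_ + _); apply: eq_bigr => t _; rewrite stage_payoffE.
Qed.

Lemma payoff_le v M : P < 1 ->
  (forall t, stage_payoff t <= M * (1 - (1 - x k t) * P)) ->
  payoff_is r x k v -> v <= M.
Proof.
move=> P1 stage_le v_lim.
have P01 : 0 <= P < 1 by have := others_continue_ge0 k p01; lra.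
apply: (Un_cv_le_geometric (c := Rabs (r set0 k - M)) v_lim P01) => T.
have := discounted_sum_le reach0 reachS (fun t => proj1 (reach_bounds t)) stage_le T.
rewrite partial_payoffE; set s := \big[Rplus/0]_(t < T) _.
have := reach_bounds T; have := Rle_abs (r set0 k - M); have := Rabs_pos (r set0 k - M).
nra.
Qed.

Lemma payoff_ge v M : P < 1 ->
  (forall t, M * (1 - (1 - x k t) * P) <= stage_payoff t) ->
  payoff_is r x k v -> M <= v.
Proof.
move=> P1 stage_ge v_lim.
have P01 : 0 <= P < 1 by have := others_continue_ge0 k p01; lra.
apply: (Un_cv_ge_geometric (c := Rabs (r set0 k - M)) v_lim P01) => T.
have := discounted_sum_ge reach0 reachS (fun t => proj1 (reach_bounds t)) stage_ge T.
rewrite partial_payoffE; set s := \big[Rplus/0]_(t < T) _.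
have := reach_bounds T; have := Rle_abs (- (r set0 k - M)); rewrite Rabs_Ropp.
have := Rabs_pos (r set0 k - M); nra.
Qed.

End AgainstStationary.

Lemma stop_prob_ge_arith (pk dl q : R) : 0 <= pk < dl -> dl <= 1/2 ->
  (dl - pk) * (1 - (dl - pk)) <= q -> dl / 4 <= pk + (1 - pk) * q.
Proof.
move=> pk_dl dl_le q_ge.
have half_s : (dl - pk) / 2 <= q by nra.
have : (1/2) * ((dl - pk) / 2) <= (1 - pk) * q by apply: Rmult_le_compat; lra.
lra.
Qed.

(* Multiplied by the stopping probability [pk + (1 - pk) * q], the inequalities
   [B <= V + eps] and [A <= (V + eps) * q] become the conclusions of the next two lemmas. *)
Lemma quit_deviation_arith A B q L pk dl gm eps : 0 <= pk < dl -> dl <= 1/2 -> 0 <= gm ->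
  3 * dl + gm <= eps / 8 -> (dl - pk) * (1 - (dl - pk)) <= q <= dl - pk ->
  L - 2 * (dl - pk) ^ 2 <= A -> - q <= B <= q -> - (gm * dl) <= L ->
  (1 - pk) * (B * q - A) <= eps * (pk + (1 - pk) * q).
Proof.
move=> pk_dl dl_le gm0 budget [q_ge q_le] A_ge [B_ge B_le] L_ge.
have q0 : 0 <= q by nra.
have Bq : B * q <= q * q by apply: Rmult_le_compat_r.
have gain_le : B * q - A <= dl * (3 * dl + gm) by nra.
have gain_le' : (1 - pk) * (B * q - A) <= dl * (3 * dl + gm).
  case: (Rle_or_lt (B * q - A) 0) => [|gain_pos]; first nra.
  have : (1 - pk) * (B * q - A) <= 1 * (B * q - A) by apply: Rmult_le_compat_r; lra.
  lra.
have := stop_prob_ge_arith pk_dl dl_le q_ge.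
have : dl * (3 * dl + gm) <= dl * (eps / 8) by apply: Rmult_le_compat_l; lra.
nra.
Qed.

Lemma continue_deviation_arith A B q L pk dl gm eps : 0 <= pk < dl -> dl <= 1/2 ->
  0 <= gm -> 3 * dl + gm <= eps / 8 -> (dl - pk) * (1 - (dl - pk)) <= q <= dl - pk ->
  A <= L + 2 * (dl - pk) ^ 2 -> - q <= B <= q -> pk * L <= gm * dl * (dl - pk) ->
  pk * (A - B * q) <= eps * q * (pk + (1 - pk) * q).
Proof.
move=> pk_dl dl_le gm0 budget [q_ge q_le] A_le [B_ge B_le] L_le.
have D_ge := stop_prob_ge_arith pk_dl dl_le q_ge.
remember (dl - pk) as s eqn:s_def.
have s0 : 0 < s by lra.
have q0 : 0 <= q by nra.
have qq : q * q <= s * s by apply: Rmult_le_compat; lra.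
have gain_le : A - B * q <= L + 3 * (s * s) by nra.
have : pk * (A - B * q) <= pk * (L + 3 * (s * s)) by apply: Rmult_le_compat_l; lra.
have : pk * (3 * (s * s)) <= dl * (3 * (s * s)) by apply: Rmult_le_compat_r; nra.
have : s * dl * (3 * s + gm) <= s * dl * (eps / 8) by apply: Rmult_le_compat_l; nra.
have : eps * (s / 2) * (dl / 4) <= eps * q * (pk + (1 - pk) * q).
  by apply: Rmult_le_compat; [nra | lra | apply: Rmult_le_compat_l; nra | lra].
nra.
Qed.

Definition single_quit_payoff (N : nat) (r : payoffs N) (rho : 'I_N -> R) (k : 'I_N) :=
  \big[Rplus/0]_j (rho j * r [set j] k).

Section SmallStationary.
Variables (N : nat) (r : payoffs N).
Hypotheses (r_valid : valid_game r) (r_diag : forall i, r [set i] i = 0).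
Variables (rho : 'I_N -> R) (dl gm eps : R).
Hypotheses (rho_ge0 : forall i, 0 <= rho i) (rho_sum : \big[Rplus/0]_i rho i = 1)
  (rho_lt1 : forall i, rho i < 1).
Hypotheses (dl_pos : 0 < dl) (dl_le : dl <= 1/2) (gm_ge0 : 0 <= gm)
  (budget : 3 * dl + gm <= eps / 8).
Hypothesis payoff_lb : forall k, - gm <= single_quit_payoff r rho k.
Hypothesis payoff_ub : forall k, rho k * single_quit_payoff r rho k <= gm * (1 - rho k).

Local Notation p := (fun i => dl * rho i).

Lemma scaled_in01 : in01 p.
Proof. by move=> i; have := rho_ge0 i; have := rho_lt1 i; nra. Qed.

Section Player.
Variable k : 'I_N.
Local Notation s := (dl - dl * rho k).
Local Notation P := (others_continue p k).
Local Notation A := (continue_payoff r p k).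
Local Notation B := (quit_payoff r p k).

Lemma sum_others_scaled : \big[Rplus/0]_i set_coord p k 0 i = s.
Proof. by rewrite sum_others -big_distrr /= rho_sum Rmult_1_r. Qed.

Lemma others_quit_bounds : s * (1 - s) <= 1 - P <= s.
Proof.
have others01 : in01 (set_coord p k 0) by apply: (set_coord_in01 k scaled_in01); lra.
have := single_mass_bounds others01; have := multiple_mass_le others01.
have := sum_quit_dist_setN0 (set_coord p k 0); rewrite big_setN0_split quit_dist_set0.
have := quit_dist_set0_ge others01; rewrite quit_dist_set0 sum_others_scaled.
have : 0 <= \big[Rplus/0]_(S : {set 'I_N} | (1 < #|S|)%N) quit_dist (set_coord p k 0) S.
  by apply: sumR_ge0 => S _; apply: quit_dist_ge0.
rewrite /others_continue; set Q1 := \big[Rplus/0]_j _; set Q2 := \big[Rplus/0]_(S | _) _.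
set P0 := \big[Rmult/1]_i _.
lra.
Qed.

Lemma others_single_quit_payoff :
  \big[Rplus/0]_j (set_coord p k 0 j * r [set j] k) = dl * single_quit_payoff r rho k.
Proof.
rewrite /single_quit_payoff big_distrr /=; apply: eq_bigr => j _.
by rewrite /set_coord; case: eqP => [->|_]; rewrite ?r_diag; ring.
Qed.

Lemma continue_payoff_bounds :
  dl * single_quit_payoff r rho k - 2 * s ^ 2 <= A <= dl * single_quit_payoff r rho k + 2 * s ^ 2.
Proof.
have others01 : in01 (set_coord p k 0) by apply: (set_coord_in01 k scaled_in01); lra.
have := quit_payoff_approx others01 (g := fun S => r S k) (fun S => r_valid S k).
have := single_mass_bounds others01.
rewrite others_single_quit_payoff sum_others_scaled /continue_payoff.
set Q1 := \big[Rplus/0]_j _; set A' := \big[Rplus/0]_(S | _) _.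
nra.
Qed.

Lemma quit_payoff_bounds : - (1 - P) <= B <= 1 - P.
Proof. exact: (quitting_payoff_bound scaled_in01 (fun S => r_valid S k) (r_diag k)). Qed.

Local Notation pk := (dl * rho k).
Local Notation D := (pk + (1 - pk) * (1 - P)).

(* The solution of [V = pk * B + (1 - pk) * (A + P * V)]. *)
Definition stationary_value := (pk * B + (1 - pk) * A) / D.

Lemma pk_bounds : 0 <= pk < dl.
Proof. by have := rho_ge0 k; have := rho_lt1 k; split; nra. Qed.

Lemma stop_prob_ge : dl / 4 <= D.
Proof. by apply: stop_prob_ge_arith pk_bounds dl_le _; case: others_quit_bounds. Qed.

Lemma stationary_valueE : stationary_value * D = pk * B + (1 - pk) * A.
Proof. by have := stop_prob_ge => D_ge; rewrite /stationary_value; field; lra. Qed.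

Lemma quit_le_value : B <= stationary_value + eps.
Proof.
have := quit_deviation_arith pk_bounds dl_le gm_ge0 budget others_quit_bounds
  (proj1 continue_payoff_bounds) quit_payoff_bounds.
have := payoff_lb k; have := stop_prob_ge; have := stationary_valueE.
set V := stationary_value; set c := single_quit_payoff r rho k => VD D_ge c_ge arith.
have {}arith := arith (ltac:(nra)).
apply: (Rmult_le_reg_r D); nra.
Qed.

Lemma continue_le_value : A <= (stationary_value + eps) * (1 - P).
Proof.
have := continue_deviation_arith pk_bounds dl_le gm_ge0 budget others_quit_bounds
  (proj2 continue_payoff_bounds) quit_payoff_bounds.
have := payoff_ub k; have := stop_prob_ge; have := stationary_valueE.
set V := stationary_value; set c := single_quit_payoff r rho k => VD D_ge c_le arith.
have : pk * (dl * c) <= gm * dl * (dl - pk).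
  have : dl * dl * (rho k * c) <= dl * dl * (gm * (1 - rho k)) by apply: Rmult_le_compat_l; nra.
  nra.
move=> /arith {}arith.
have VDq : V * D * (1 - P) = (pk * B + (1 - pk) * A) * (1 - P) by rewrite VD.
by apply: (Rmult_le_reg_r D); lra.
Qed.

Lemma others_continue_lt1 : P < 1.
Proof. have := others_quit_bounds; have := pk_bounds; nra. Qed.

Lemma stationary_payoff v : payoff_is r (fun i _ => p i) k v -> v = stationary_value.
Proof.
have stage : dl * rho k * B + (1 - dl * rho k) * A =
    stationary_value * (1 - (1 - dl * rho k) * P) by have := stationary_valueE; lra.
have x_profile : is_profile (fun i _ => p i) by move=> i t; apply: scaled_in01.
move=> v_lim; apply: Rle_antisym.
- exact: (payoff_le scaled_in01 (fun _ _ _ => erefl) x_profile others_continue_lt1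
    (fun=> Req_le _ _ stage) v_lim).
- exact: (payoff_ge scaled_in01 (fun _ _ _ => erefl) x_profile others_continue_lt1
    (fun=> Req_le_sym _ _ stage) v_lim).
Qed.

Lemma deviation_payoff y w : is_strategy y ->
  payoff_is r (deviate (fun i _ => p i) k y) k w -> w <= stationary_value + eps.
Proof.
move=> y01 w_lim.
apply: (payoff_le scaled_in01 _ _ others_continue_lt1 _ w_lim).
- by move=> i t ik; rewrite /deviate (negbTE ik).
- by move=> i t; rewrite /deviate; case: (i == k); [apply: y01 | apply: scaled_in01].
move=> t; rewrite /deviate eqxx.
have := quit_le_value; have := continue_le_value; have := y01 t.
set V := stationary_value => yt A_le B_le.
have : y t * B <= y t * (V + eps) by apply: Rmult_le_compat_l; lra.
have : (1 - y t) * A <= (1 - y t) * ((V + eps) * (1 - P)) by apply: Rmult_le_compat_l; lra.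
(* [payoff_le] elaborated these terms with another, convertible, index type; naming them
   lets [lra] treat both copies as the same atom. *)
set P0 := others_continue _ _; set A0 := continue_payoff _ _ _; set B0 := quit_payoff _ _ _.
lra.
Qed.

End Player.

Lemma small_stationary_equilibrium : eps_equilibrium r (fun i _ => dl * rho i) eps.
Proof.
split=> [i t|k y y01 v w v_lim w_lim]; first exact: scaled_in01.
by rewrite (stationary_payoff v_lim); have := deviation_payoff y01 w_lim; lra.
Qed.

End SmallStationary.

Lemma stationary_equilibrium_of_weights (N : nat) (r : payoffs N) (rho : 'I_N -> R) (gm eps : R) :
  valid_game r -> (forall i, r [set i] i = 0) ->
  (forall i, 0 <= rho i) -> \big[Rplus/0]_i rho i = 1 -> (forall i, rho i < 1) ->
  0 < eps -> 0 <= gm <= eps / 16 ->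
  (forall k, - gm <= single_quit_payoff r rho k) ->
  (forall k, rho k * single_quit_payoff r rho k <= gm * (1 - rho k)) ->
  exists x : profile N, stationary x /\ eps_equilibrium r x eps.
Proof.
move=> r_valid r_diag rho_ge0 rho_sum rho_lt1 eps0 gm_bounds payoff_lb payoff_ub.
have dl_pos : 0 < Rmin (1/2) (eps / 48) by apply: Rmin_pos; lra.
have := Rmin_l (1/2) (eps / 48); have := Rmin_r (1/2) (eps / 48) => dl_eps dl_half.
exists (fun i _ => Rmin (1/2) (eps / 48) * rho i); split=> //.
by apply: (@small_stationary_equilibrium N r r_valid r_diag rho _ gm) => //; lra.
Qed.

Lemma stationary_equilibrium_of_pair (N : nat) (r : payoffs N) (k0 j0 : 'I_N) (eps : R) :
  valid_game r -> (forall i, r [set i] i = 0) -> 0 < eps ->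
  j0 != k0 -> r [set j0] k0 <= 0 -> (forall i, 0 <= r [set k0] i) ->
  exists x : profile N, stationary x /\ eps_equilibrium r x eps.
Proof.
move=> r_valid r_diag eps0 j0k0 r_j0k0 r_k0_ge0.
set al := Rmin (1/2) (eps / 32).
have al_pos : 0 < al by apply: Rmin_pos; lra.
have := Rmin_l (1/2) (eps / 32); have := Rmin_r (1/2) (eps / 32); rewrite -/al => al_eps al_half.
pose rho i := (if i == k0 then 1 - al else 0) + (if i == j0 then al else 0).
have sum_delta (F : 'I_N -> R) a :
    \big[Rplus/0]_i (if i == a then F i else 0) = F a by rewrite -big_mkcond big_pred1_eq.
have payoffE k : single_quit_payoff r rho k = (1 - al) * r [set k0] k + al * r [set j0] k.
  rewrite /single_quit_payoff -(sum_delta (fun j => (1 - al) * r [set j] k) k0).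
  rewrite -(sum_delta (fun j => al * r [set j] k) j0) -big_split /=.
  by apply: eq_bigr => j _; rewrite /rho; case: (j == k0); case: (j == j0); ring.
apply: (@stationary_equilibrium_of_weights N r rho (2 * al) eps) => //.
- by move=> i; rewrite /rho; case: (i == k0); case: (i == j0); lra.
- by rewrite big_split /= !sum_delta; lra.
- move=> i; rewrite /rho; case: eqP => [->|_]; last by case: (i == j0); lra.
  by rewrite eq_sym (negbTE j0k0); lra.
- lra.
- by move=> k; rewrite payoffE; have := r_k0_ge0 k; have := r_valid [set j0] k; nra.
move=> k; rewrite payoffE /rho.
case: eqP => [->|_].
  have : al * r [set j0] k0 <= 0 by nra.
  by rewrite eq_sym (negbTE j0k0) r_diag; nra.
case: eqP => [->|_]; last lra.
have : al * (1 - al) * r [set k0] j0 <= al * (1 - al) * 1.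
  by apply: Rmult_le_compat_l; [nra | case: (r_valid [set k0] j0)].
by rewrite r_diag; nra.
Qed.

Section NormalPlayers.
Variables (N : nat) (r : payoffs N).

Lemma mem_Istar i : i \in Istar r <-> forall l, i \in I_level r l.
Proof. by rewrite /Istar inE; case: excluded_middle_informative. Qed.

Lemma mem_normal_step A i : i \in normal_step r A <->
  i \in A /\ exists j, [/\ j \in A, j != i & r [set j] i <= 0].
Proof.
rewrite /normal_step inE /Rleb; split.
- case/andP=> iA /existsP[j /and3P[jA ji]]; case: Rle_dec => // le _.
  by split=> //; exists j.
- case=> iA [j [jA ji le]]; rewrite iA; apply/existsP; exists j.
  by rewrite jA ji; case: Rle_dec.
Qed.

Lemma I_levelS l : I_level r l.+1 = normal_step r (I_level r l).
Proof. by rewrite /I_level iterS. Qed.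

Lemma Istar_nonpos_opponent k : k \in Istar r -> exists2 j, j != k & r [set j] k <= 0.
Proof.
move/mem_Istar/(_ 1%N); rewrite I_levelS => /mem_normal_step[_ [j [_ jk le]]].
by exists j.
Qed.

Lemma notin_I_level_drop k l : k \notin I_level r l ->
  exists m, k \in I_level r m /\ k \notin I_level r m.+1.
Proof.
elim: l => [|l IH]; first by rewrite /I_level inE.
by case kl: (k \in I_level r l) => kl1; [exists l; rewrite kl | apply: IH; rewrite kl].
Qed.

Lemma notin_Istar_pos k j : k \notin Istar r -> j \in Istar r -> 0 < r [set j] k.
Proof.
move=> kN jI.
have [l kl] : exists l, k \notin I_level r l.
  by apply: NNPP => all_in; move/negP: kN; apply; apply/mem_Istar => l;
     apply: NNPP => kl; apply: all_in; exists l; apply/negP.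
have [m [km kNm]] := notin_I_level_drop kl.
apply: Rnot_le_lt => le; move/negP: kNm; apply.
rewrite I_levelS; apply/mem_normal_step; split=> //; exists j; split=> //.
  by move/mem_Istar: jI.
by apply/eqP => jk; move: kN; rewrite -jk jI.
Qed.

End NormalPlayers.

Lemma stationary_equilibrium_of_complementary_weights (N : nat) (r : payoffs N)
    (rho : 'I_N -> R) (eps : R) :
  valid_game r -> (forall i, r [set i] i = 0) -> 0 < eps ->
  (forall i, 0 <= rho i) -> \big[Rplus/0]_i rho i = 1 ->
  (forall k, 0 <= single_quit_payoff r rho k) ->
  (forall k, rho k * single_quit_payoff r rho k = 0) ->
  (forall k, rho k <> 0 -> k \in Istar r) ->
  exists x : profile N, stationary x /\ eps_equilibrium r x eps.
Proof.
move=> r_valid r_diag eps0 rho_ge0 rho_sum payoff_ge0 compl support.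
have rho_le1 i : rho i <= 1.
  by rewrite -rho_sum; apply: (sumR_ge_term (P := predT)) => // j _; apply: rho_ge0.
case: (classic (exists k0, rho k0 = 1)) => [[k0 k0_one]|all_lt1]; last first.
  apply: (@stationary_equilibrium_of_weights N r rho 0 eps) => //; try lra.
  - by move=> i; case: (rho_le1 i) => // i1; case: all_lt1; exists i.
  - by move=> k; have := payoff_ge0 k; lra.
  - by move=> k; rewrite compl; lra.
have others_zero i : i != k0 -> rho i = 0.
  move=> ik0; have := rho_sum; rewrite (bigD1 k0) //= k0_one => rest0.
  have := @sumR_ge_term _ (fun j => j != k0) rho i ik0 (fun j _ => rho_ge0 j).
  by have := rho_ge0 i; set s := \big[Rplus/0]_(j | _) _ in rest0 *; lra.
have payoffE k : single_quit_payoff r rho k = r [set k0] k.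
  rewrite /single_quit_payoff (bigD1 k0) //= k0_one big1 => [|j /others_zero ->]; ring.
have [j0 j0k0 r_j0k0] := Istar_nonpos_opponent (support k0 ltac:(lra)).
apply: (stationary_equilibrium_of_pair r_valid r_diag eps0 j0k0 r_j0k0) => i.
by rewrite -payoffE.
Qed.

Section LCPWeights.
Variables (N : nat) (r : payoffs N) (w : 'I_N -> R) (z0 : R) (z : 'I_N -> R).
Hypotheses (sol : LCP_sol r (fun _ => 0) w z0 z) (z0_lt1 : z0 < 1).

Definition lcp_weight i := if i \in Istar r then z i / (1 - z0) else 0.

Lemma lcp_weight_ge0 i : 0 <= lcp_weight i.
Proof.
rewrite /lcp_weight; case: ifP => [iI|_]; last lra.
case: sol => _ [z_ge0 _]; apply: Rmult_le_pos; first exact: z_ge0.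
by apply/Rlt_le/Rinv_0_lt_compat; lra.
Qed.

Lemma lcp_weight_sum : \big[Rplus/0]_i lcp_weight i = 1.
Proof.
have z_sum : \big[Rplus/0]_(i in Istar r) z i = 1 - z0 by case: sol => _ [_ [+ _]]; lra.
rewrite /lcp_weight -big_mkcond /= (eq_bigr (fun i => z i * / (1 - z0))) //.
by rewrite -big_distrl /= z_sum; field; lra.
Qed.

Lemma lcp_weight_support k : lcp_weight k <> 0 -> k \in Istar r.
Proof. by rewrite /lcp_weight; case: ifP. Qed.

Lemma lcp_payoffE k :
  single_quit_payoff r lcp_weight k = \big[Rplus/0]_(j in Istar r) (z j * r [set j] k) / (1 - z0).
Proof.
rewrite /single_quit_payoff /Rdiv big_distrl /= [in RHS]big_mkcond /=.
apply: eq_bigr => j _; rewrite /lcp_weight.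
by case: ifP => _; rewrite -?Rmult_div_swap ?Rmult_0_l.
Qed.

Lemma lcp_payoff_Istar k : k \in Istar r ->
  single_quit_payoff r lcp_weight k = w k / (1 - z0).
Proof.
move=> kI; case: sol => _ [_ [_ /(_ k kI) [_ [-> _]]]].
by rewrite lcp_payoffE Rmult_0_r Rplus_0_l.
Qed.

Lemma lcp_payoff_ge0 k : 0 <= single_quit_payoff r lcp_weight k.
Proof.
have inv_pos : 0 < / (1 - z0) by apply: Rinv_0_lt_compat; lra.
case kI: (k \in Istar r).
  rewrite lcp_payoff_Istar //; case: sol => _ [_ [_ /(_ k kI) [w_ge0 _]]].
  by apply: Rmult_le_pos; lra.
rewrite lcp_payoffE; apply: Rmult_le_pos; last lra.
apply: sumR_ge0 => j jI; case: sol => _ [/(_ j jI) z_ge0 _].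
by have := notin_Istar_pos (negbT kI) jI; nra.
Qed.

Lemma lcp_complementarity k : lcp_weight k * single_quit_payoff r lcp_weight k = 0.
Proof.
rewrite /lcp_weight; case: ifP => kI; last ring.
rewrite lcp_payoff_Istar //; case: sol => _ [_ [_ /(_ k kI) [_ [_ [->|->]]]]].
all: by rewrite /Rdiv; ring.
Qed.

End LCPWeights.

Theorem lemma3 (N : nat) (r : payoffs N) :
  valid_game r ->
  (forall i : 'I_N, r [set i] i = 0) ->
  Istar r != set0 ->
  (exists (w : 'I_N -> R) (z0 : R) (z : 'I_N -> R),
      LCP_sol r (fun _ => 0) w z0 z /\ z0 < 1) ->
  forall eps : R, eps > 0 ->
  exists x : profile N, stationary x /\ eps_equilibrium r x eps.
Proof.
move=> r_valid r_diag _ [w [z0 [z [sol z0_lt1]]]] eps eps0.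
apply: (stationary_equilibrium_of_complementary_weights (rho := lcp_weight r z0 z)) => //.
- exact: lcp_weight_ge0 sol z0_lt1.
- exact: lcp_weight_sum sol z0_lt1.
- exact: lcp_payoff_ge0 sol z0_lt1.
- exact: lcp_complementarity sol.
- exact: lcp_weight_support.
Qed.
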